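(* Let $n$ be a non-negative integer and $r,s\in\mathbb{C}\setminus\mathbb{Z}^{-}$ with $s\neq0$ and $r-s\notin\mathbb{Z}^{-}$. Then \[ \sum_{k=0}^{n}(-1)^k2^{2k}\frac{\binom{n+k}{n-k}}{(k+s)\binom{k+r}{k+s}}=\sum_{k=0}^{n}(-1)^{n-k}\frac{\binom{2n+1}{2k+1}}{(n-k+s)\binom{n+r}{n-k+s}}. \]
   Context: $\mathbb{Z}^{-}$ denotes the set of negative integers. Binomial coefficients with complex entries: $\binom{x}{y}=\frac{\Gamma(x+1)}{\Gamma(y+1)\Gamma(x-y+1)}$. *)

From Stdlib Require Import Reals Factorial.
From Coquelicot Require Import Coquelicot.
Open Scope R_scope.

(* m^z := exp(z ln m) (principal value) for a real m > 0 and complex z. *)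
Definition Cpow_pos (m : R) (z : C) : C :=
  (exp (Re z * ln m) * cos (Im z * ln m), exp (Re z * ln m) * sin (Im z * ln m)).

Fixpoint Cprod_upto (m : nat) (f : nat -> C) : C :=
  match m with
  | O => f O
  | S m' => Cmult (Cprod_upto m' f) (f (S m'))
  end.
Fixpoint Csum_upto (n : nat) (f : nat -> C) : C :=
  match n with
  | O => f O
  | S n' => Cplus (Csum_upto n' f) (f (S n'))
  end.

(* Gauss' product formula: Gamma z = lim_{m->oo} m! m^z / (z (z+1) ... (z+m)),
   valid (convergent) for every z not in {0,-1,-2,...}. *)
Definition Gamma_seq (z : C) (m : nat) : C :=
  Cdiv (Cmult (RtoC (INR (fact m))) (Cpow_pos (INR m) z))
       (Cprod_upto m (fun j => Cplus z (RtoC (INR j)))).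

Definition CGamma (z : C) : C :=
  (real (Lim_seq (fun m => Re (Gamma_seq z m))),
   real (Lim_seq (fun m => Im (Gamma_seq z m)))).

Definition Cbinom (x y : C) : C :=
  Cdiv (CGamma (Cplus x 1))
       (Cmult (CGamma (Cplus y 1)) (CGamma (Cplus (Cminus x y) 1))).

Definition is_neg_int (z : C) : Prop := exists m : nat, z = RtoC (- INR (S m)).

(* Put x = r + 1 and y = r - s + 1, so that x = s + y.  By Gamma(z + k) = (z)_k Gamma(z), the
   reciprocal binomials in the k-th terms are Gamma(s) Gamma(y) / Gamma(x) times f(k, 0) on the
   left and f(n - k, k) on the right, where f(a, b) = (s)_a (y)_b / (x)_(a+b).  Since x = s + y,
   f(a, b + 1) = f(a, b) - f(a + 1, b), hence f(a, b) = sum_i (-1)^i C(b, i) f(a + i, 0), and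
   comparing the coefficients of f(m, 0) leaves
   sum_k C(2n + 1, 2k + 1) C(k, n - m) = 4^m C(n + m, 2m),
   which follows from a two-step recurrence in the upper index.
   Gamma is Gauss' product limit; it exists, and Gamma(z + 1) = z Gamma(z), because consecutive
   partial products differ by factors 1 + O(1/m^2). *)

From Stdlib Require Import Reals Lra Lia Factorial.
From mathcomp Require all_boot all_algebra Rstruct ring zify.

(** * Binomial coefficient identities *)

Module BinomialSums.
Import mathcomp.boot.all_boot mathcomp.algebra.all_algebra mathcomp.reals_stdlib.Rstruct.
Import mathcomp.algebra_tactics.ring mathcomp.zify.zify.
Import GRing.Theory.

Section TruncatedSums.
Variable B : nat.

(* Truncated at [k = B], which drops no nonzero term while [N <= B.*2.+1]. *)
Definition odd_binom_sum N j := \sum_(k < B.+1) 'C(N, k.*2.+1) * 'C(k, j).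
Definition even_binom_sum N j := \sum_(k < B.+1) 'C(N, k.*2) * 'C(k, j).

Lemma odd_binom_sumS N j :
  odd_binom_sum N.+1 j = odd_binom_sum N j + even_binom_sum N j.
Proof.
rewrite /odd_binom_sum /even_binom_sum -big_split /=.
by apply: eq_bigr => k _; rewrite binS mulnDl.
Qed.

Lemma odd_binom_sum_drop_last N j : N <= B.*2 ->
  odd_binom_sum N j = \sum_(k < B) 'C(N, k.*2.+1) * 'C(k, j).
Proof. by move=> hN; rewrite /odd_binom_sum big_ord_recr /= bin_small ?addn0. Qed.

Lemma even_binom_sumSS N j : N <= B.*2 ->
  even_binom_sum N.+1 j.+1 =
  even_binom_sum N j.+1 + odd_binom_sum N j.+1 + odd_binom_sum N j.
Proof.
move=> hN; rewrite !odd_binom_sum_drop_last // /even_binom_sum.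
rewrite !big_ord_recl /= !bin0 !bin0n /= !add0n -!big_split /=.
apply: eq_bigr => k _; rewrite /bump /= !add1n doubleS.
by rewrite [in LHS](binS N) [in LHS](binS k) [in RHS](binS k); ring.
Qed.

Lemma even_binom_sumS0 N : N <= B.*2 ->
  even_binom_sum N.+1 0 = even_binom_sum N 0 + odd_binom_sum N 0.
Proof.
move=> hN; rewrite odd_binom_sum_drop_last // /even_binom_sum.
rewrite !big_ord_recl /= !bin0 !muln1 -addnA -big_split /=.
congr (_ + _); apply: eq_bigr => k _.
by rewrite /bump /= !add1n doubleS binS !bin0 !muln1.
Qed.

Lemma odd_binom_sumSS N j : N <= B.*2 ->
  odd_binom_sum N.+2 j.+1 = 2 * odd_binom_sum N.+1 j.+1 + odd_binom_sum N j.
Proof. by move=> hN; rewrite odd_binom_sumS even_binom_sumSS // odd_binom_sumS; ring. Qed.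

Lemma odd_binom_sumSS0 N : N <= B.*2 ->
  odd_binom_sum N.+2 0 = 2 * odd_binom_sum N.+1 0.
Proof. by move=> hN; rewrite odd_binom_sumS even_binom_sumS0 // odd_binom_sumS; ring. Qed.

Lemma odd_binom_sum_small N j : N <= 1 -> odd_binom_sum N.+1 j = N.+1 * 'C(0, j).
Proof.
by case: N => [|[|//]] _; rewrite /odd_binom_sum big_ord_recl /= big1 ?addn0.
Qed.

Lemma odd_binom_sumE N j : N <= B.*2.+1 ->
  4 ^ j * odd_binom_sum N.+1 j = 2 ^ N * 'C(N - j, j).
Proof.
elim/ltn_ind: N j => -[|[|N]] IH j hN.
- by rewrite odd_binom_sum_small //; case: j => [|j] //=; rewrite muln0.
- by rewrite odd_binom_sum_small //; case: j => [|[|j]] //=; rewrite !muln0.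
have hN' : N.+1 <= B.*2 by [].
case: j => [|j].
  rewrite odd_binom_sumSS0 // expn0 mul1n.
  have := IH N.+1 (ltnSn _) 0 (ltnW hN); rewrite expn0 !mul1n => ->.
  by rewrite !subn0 !bin0 !muln1 [2 ^ N.+2]expnS.
rewrite odd_binom_sumSS //.
have E1 := IH N.+1 (ltnSn _) j.+1 (ltnW hN).
have E2 := IH N (ltnW (ltnSn _)) j (ltnW (ltnW hN)).
transitivity (2 * (4 ^ j.+1 * odd_binom_sum N.+2 j.+1) + 4 * (4 ^ j * odd_binom_sum N.+1 j)).
  by rewrite [4 ^ j.+1]expnS; ring.
rewrite E1 E2 !subSS.
case: (leqP j N) => hj.
  by rewrite (subSn hj) binS !expnS; ring.
have -> : N - j = 0 by lia.
have -> : N.+1 - j = 0 by lia.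
by case: j {E1 E2} hj => // j _; rewrite !bin0n !muln0.
Qed.

End TruncatedSums.

Lemma odd_binom_sum_coef n m : m <= n ->
  \sum_(k < n.+1) 'C(n.*2.+1, k.*2.+1) * 'C(k, n - m) = 4 ^ m * 'C(n + m, m.*2).
Proof.
move=> hm.
have := odd_binom_sumE n (n.*2) (n - m) (leqnSn _); rewrite /odd_binom_sum.
have -> : n.*2 - (n - m) = n + m by rewrite -addnn; lia.
have -> : 'C(n + m, n - m) = 'C(n + m, m.*2).
  have -> : n - m = (n + m) - m.*2 by rewrite -addnn; lia.
  by rewrite bin_sub //; rewrite -addnn; lia.
have -> : 2 ^ n.*2 = 4 ^ (n - m) * 4 ^ m.
  by rewrite -expnD subnK // -muln2 mulnC expnM.
by rewrite -mulnA => /eqP; rewrite eqn_pmul2l ?expn_gt0 // => /eqP.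
Qed.

Section DifferenceTable.
Local Open Scope ring_scope.
Variables (R : comPzRingType) (phi : nat -> nat -> R).
Hypothesis phi_rec : forall a b, phi a b.+1 = phi a b - phi a.+1 b.

Lemma phi_expand M b a : (b < M)%N ->
  phi a b = \sum_(i < M) (-1) ^+ i * 'C(b, i)%:R * phi (a + i)%N 0.
Proof.
case: M => [//|M].
elim: b a => [|b IH] a hb.
  rewrite big_ord_recl big1 /= ?addn0 ?bin0 ?expr0 ?addr0; first by ring.
  by move=> i _; rewrite bin0n mulr0 mul0r.
rewrite phi_rec (IH a (ltnW hb)) (IH a.+1 (ltnW hb)).
rewrite big_ord_recl [in X in _ - X]big_ord_recr /= big_ord_recl /=.
rewrite (@bin_small b M) // mulr0 mul0r addr0 !bin0 -addrA; congr (_ + _).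
rewrite -sumrB; apply: eq_bigr => i _.
by rewrite /bump /= add1n addSn addnS binS exprS natrD; ring.
Qed.

Lemma phi_antidiagonal n k : (k <= n)%N ->
  (-1) ^+ (n - k) * phi (n - k)%N k =
  \sum_(m < n.+1) (-1) ^+ m * 'C(k, n - m)%:R * phi m 0.
Proof.
move=> hk; rewrite (@phi_expand k.+1) //.
rewrite -(big_mkord xpredT (fun m => (-1) ^+ m * 'C(k, n - m)%:R * phi m 0)).
rewrite (big_cat_nat (n := n - k)) //=; last by lia.
rewrite [X in X + _]big1_seq ?add0r; last first.
  move=> m; rewrite mem_index_iota => /andP [_ hm].
  by rewrite bin_small ?mulr0 ?mul0r //; lia.
rewrite (big_addn 0 _ (n - k)).
have -> : (n.+1 - (n - k) = k.+1)%N by lia.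
rewrite big_mkord mulr_sumr; apply: eq_bigr => i _.
have hi : (i <= k)%N by rewrite -ltnS.
have -> : (n - (i + (n - k)) = k - i)%N by lia.
by rewrite bin_sub // exprD (addnC (n - k)%N); ring.
Qed.

(* Expand each [phi (n - k) k] by [phi_antidiagonal] and exchange the sums. *)
Lemma binomial_transform_identity n :
  \sum_(k < n.+1) (-4) ^+ k * 'C(n + k, k.*2)%:R * phi k 0 =
  \sum_(k < n.+1) (-1) ^+ (n - k) * 'C(n.*2.+1, k.*2.+1)%:R * phi (n - k)%N k.
Proof.
transitivity (\sum_(k < n.+1) 'C(n.*2.+1, k.*2.+1)%:R *
   \sum_(m < n.+1) (-1) ^+ m * 'C(k, n - m)%:R * phi m 0); last first.
  apply: eq_bigr => k _.
  have hk : (k <= n)%N by rewrite -ltnS.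
  by rewrite -(phi_antidiagonal n k hk); ring.
under [in RHS]eq_bigr => k _ do rewrite mulr_sumr.
rewrite exchange_big /=; apply: eq_bigr => m _.
transitivity ((-1) ^+ m * phi m 0 *
  (\sum_(i < n.+1) 'C(n.*2.+1, i.*2.+1) * 'C(i, n - m))%:R).
  have hm : (m <= n)%N by rewrite -ltnS.
  rewrite odd_binom_sum_coef // natrM natrX.
  have -> : (-4 : R) = (-1) * 4%:R by rewrite mulN1r.
  by rewrite exprMn; ring.
by rewrite natr_sum mulr_sumr; apply: eq_bigr => i _; rewrite natrM; ring.
Qed.

End DifferenceTable.

Lemma binomial_fact_INR n k : (k <= n)%coq_nat ->
  Rmult (INR 'C(n, k)) (Rmult (INR (fact k)) (INR (fact (n - k)))) = INR (fact n).
Proof. by move/leP=> h; rewrite -!mult_INR !factE; congr INR; exact: bin_fact. Qed.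

Lemma real_binomial_transform_identity (phi : nat -> nat -> R)
  (phi_rec : forall a b, phi a (S b) = Rminus (phi a b) (phi (S a) b)) (n : nat) :
  sum_f_R0 (fun k => Rmult (Rmult (pow (-4) k) (INR 'C(n + k, 2 * k))) (phi k O)) n =
  sum_f_R0 (fun k => Rmult (Rmult (pow (-1) (n - k)) (INR 'C(2 * n + 1, 2 * k + 1)))
                           (phi (n - k)%nat k)) n.
Proof.
have h4 : (-4 : R) = GRing.opp (4%:R : R).
  change (-4 : R) with (IZR (- (Z.pos 4))).
  by rewrite opp_IZR IZRposE INRE RoppE.
rewrite !sum_f_R0E !big_mkord.
under eq_bigr => i _ do rewrite RmultE RmultE RpowE INRE h4 mul2n.
under [in RHS]eq_bigr => i _ do rewrite RmultE RmultE RpowE INRE mul2n mul2n !addn1.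
exact: binomial_transform_identity.
Qed.

End BinomialSums.

From Coquelicot Require Import Coquelicot.
Open Scope R_scope.

(** * Gamma as the limit of Gauss' product *)

Lemma exp_le_inv_1_sub a : a < 1 -> exp a <= / (1 - a).
Proof.
intros Ha.
assert (H1 := exp_ineq1_le (- a)). rewrite exp_Ropp in H1.
assert (Hp : 0 < exp a) by apply exp_pos.
apply (Rmult_le_reg_r (1 - a)); [lra|]. rewrite Rinv_l by lra.
apply (Rmult_le_reg_r (/ exp a)); [apply Rinv_0_lt_compat; lra|].
replace (exp a * (1 - a) * / exp a) with (1 - a) by (field; lra).
lra.
Qed.

Lemma exp_near_0_bounds a : Rabs a <= / 2 ->
  Rabs (exp a - 1 - a) <= 2 * a ^ 2 /\ Rabs (exp a - 1) <= 2 * Rabs a /\ 0 < exp a <= 2.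
Proof.
intros Ha. apply Rabs_le_between in Ha.
assert (Hl := exp_ineq1_le a).
assert (Hu := exp_le_inv_1_sub a ltac:(lra)).
assert (Hu2 : / (1 - a) <= 1 + a + 2 * a ^ 2).
{ apply (Rmult_le_reg_r (1 - a)); [lra|]. rewrite Rinv_l by lra.
  assert (0 <= a ^ 2 * (1 - 2 * a)) by (apply Rmult_le_pos; nra). nra. }
assert (0 <= a ^ 2) by nra.
split; [|split].
- rewrite Rabs_pos_eq by lra. lra.
- apply Rabs_le. destruct (Rle_dec 0 a).
  + rewrite (Rabs_pos_eq a) by lra. nra.
  + rewrite (Rabs_left a) by lra. nra.
- split; [apply exp_pos|nra].
Qed.

Lemma cos_sub_1_bound b : Rabs b <= / 2 -> Rabs (cos b - 1) <= b ^ 2 / 2.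
Proof.
intros Hb. apply Rabs_le_between in Hb.
destruct (pre_cos_bound b 0 ltac:(lra) ltac:(lra)) as [H1 _].
unfold cos_approx, cos_term in H1. simpl in H1.
assert (H3 := COS_bound b).
rewrite Rabs_left1; lra.
Qed.

Lemma sin_sub_id_bound b : Rabs b <= / 2 -> Rabs (sin b - b) <= b ^ 2.
Proof.
assert (Hpos : forall b, 0 <= b <= / 2 -> Rabs (sin b - b) <= b ^ 2).
{ intros c Hc.
  destruct (pre_sin_bound c 0 ltac:(lra) ltac:(lra)) as [H1 H2].
  unfold sin_approx, sin_term in H1, H2. simpl in H1, H2.
  assert (0 <= c ^ 3) by (apply pow_le; lra).
  assert (c ^ 3 <= c ^ 2) by (replace (c ^ 3) with (c ^ 2 * c) by ring; nra).
  assert (c ^ 5 <= c ^ 3) by (replace (c ^ 5) with (c ^ 3 * (c * c)) by ring; nra).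
  apply Rabs_le. split; nra. }
intros Hb. apply Rabs_le_between in Hb.
destruct (Rle_dec 0 b).
- apply Hpos; lra.
- replace (sin b - b) with (- (sin (- b) - (- b))) by (rewrite sin_neg; ring).
  rewrite Rabs_Ropp. replace (b ^ 2) with ((- b) ^ 2) by ring. apply Hpos; lra.
Qed.

Ltac Ceq := apply injective_projections; simpl; try lra; try ring.

Definition cexp (a b : R) : C := (exp a * cos b, exp a * sin b).

Lemma cexp_add a b a' b' : cexp (a + a') (b + b') = Cmult (cexp a b) (cexp a' b').
Proof. unfold cexp. Ceq; rewrite exp_plus, ?cos_plus, ?sin_plus; ring. Qed.

Lemma Cmod_le_Rabs_Re_Im u : Cmod u <= Rabs (Re u) + Rabs (Im u).
Proof.
assert (H1 := Rabs_pos (Re u)); assert (H2 := Rabs_pos (Im u)).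
unfold Cmod, Re, Im in *.
rewrite <- (sqrt_pow2 (Rabs (fst u) + Rabs (snd u))) by lra.
apply sqrt_le_1_alt.
rewrite <- (pow2_abs (fst u)), <- (pow2_abs (snd u)). nra.
Qed.

Lemma Im_le_Cmod z : Rabs (Im z) <= Cmod z.
Proof. eapply Rle_trans; [|apply Rmax_Cmod]. apply Rmax_r. Qed.

Lemma cexp_sub_linear_bound a b : Rabs a <= / 2 -> Rabs b <= / 2 ->
  Cmod (cexp a b - 1 - (a, b)) <= 4 * (a ^ 2 + b ^ 2).
Proof.
intros Ha Hb.
destruct (exp_near_0_bounds a Ha) as [E1 [E2 E3]].
assert (C1 := cos_sub_1_bound b Hb).
assert (S1 := sin_sub_id_bound b Hb).
assert (Hab : 2 * Rabs a * Rabs b <= a ^ 2 + b ^ 2).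
{ rewrite <- (pow2_abs a), <- (pow2_abs b).
  assert (0 <= (Rabs a - Rabs b) ^ 2) by apply pow2_ge_0. nra. }
eapply Rle_trans; [apply Cmod_le_Rabs_Re_Im|].
replace (Re (cexp a b - 1 - (a, b))) with (exp a * (cos b - 1) + (exp a - 1 - a))
  by (unfold Re; simpl; ring).
replace (Im (cexp a b - 1 - (a, b))) with (exp a * (sin b - b) + b * (exp a - 1))
  by (unfold Im; simpl; ring).
assert (HRe : Rabs (exp a * (cos b - 1) + (exp a - 1 - a)) <= b ^ 2 + 2 * a ^ 2).
{ eapply Rle_trans; [apply Rabs_triang|]. rewrite Rabs_mult, (Rabs_pos_eq (exp a)) by lra.
  assert (0 <= Rabs (cos b - 1)) by apply Rabs_pos. nra. }
assert (HIm : Rabs (exp a * (sin b - b) + b * (exp a - 1)) <= 2 * b ^ 2 + Rabs b * (2 * Rabs a)).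
{ eapply Rle_trans; [apply Rabs_triang|]. rewrite !Rabs_mult, (Rabs_pos_eq (exp a)) by lra.
  assert (0 <= Rabs (sin b - b)) by apply Rabs_pos.
  assert (0 <= Rabs b) by apply Rabs_pos. nra. }
assert (0 <= a ^ 2) by apply pow2_ge_0.
lra.
Qed.

Lemma ln_succ_bounds m : (1 <= m)%nat ->
  / INR (S m) <= ln (INR (S m)) - ln (INR m) <= / INR m.
Proof.
intros Hm.
assert (H0 : 1 <= INR m) by (apply (le_INR 1); lia).
rewrite S_INR.
split.
- assert (H1 := exp_ineq1_le (- / (INR m + 1))). rewrite exp_Ropp in H1.
  assert (H2 : INR m <= exp (ln (INR m + 1) - / (INR m + 1))).
  { unfold Rminus. rewrite exp_plus, exp_ln, exp_Ropp by lra.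
    replace (INR m) with ((INR m + 1) * (1 + - / (INR m + 1))) at 1 by (field; lra).
    apply Rmult_le_compat_l; lra. }
  apply ln_le in H2; [|lra]. rewrite ln_exp in H2. lra.
- assert (H1 := exp_ineq1_le (/ INR m)).
  assert (H2 : INR m + 1 <= exp (ln (INR m) + / INR m)).
  { rewrite exp_plus, exp_ln by lra.
    replace (INR m + 1) with (INR m * (1 + / INR m)) by (field; lra).
    apply Rmult_le_compat_l; lra. }
  apply ln_le in H2; [|lra]. rewrite ln_exp in H2. lra.
Qed.

Lemma Cmod_add_real_lower z x : 2 * Cmod z <= x -> x / 2 <= Cmod (Cplus z (RtoC x)).
Proof.
intros Hx.
assert (HRe := re_le_Cmod z). apply Rabs_le_between in HRe.
eapply Rle_trans; [|apply re_le_Cmod]. eapply Rle_trans; [|apply Rle_abs].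
unfold Re in *; simpl. lra.
Qed.

Definition nonpole (z : C) := forall j : nat, Cplus z (RtoC (INR j)) <> 0.

Lemma Cprod_shifts_neq0 z m : nonpole z -> Cprod_upto m (fun j => Cplus z (RtoC (INR j))) <> 0.
Proof.
intros Hz. induction m; simpl.
- exact (Hz O).
- apply Cmult_neq_0; [exact IHm | exact (Hz (S m))].
Qed.

Definition ln_step (m : nat) := ln (INR (S m)) - ln (INR m).

Definition gauss_ratio (z : C) (m : nat) : C :=
  Cdiv (Cmult (RtoC (INR (S m))) (cexp (Re z * ln_step m) (Im z * ln_step m)))
       (Cplus z (RtoC (INR (S m)))).

Lemma Gamma_seq_succ z m : nonpole z -> (1 <= m)%nat ->
  Gamma_seq z (S m) = Cmult (Gamma_seq z m) (gauss_ratio z m).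
Proof.
intros Hz Hm.
assert (HP := Cprod_shifts_neq0 z m Hz).
assert (Hd := Hz (S m)).
assert (E : Cpow_pos (INR (S m)) z =
            Cmult (Cpow_pos (INR m) z) (cexp (Re z * ln_step m) (Im z * ln_step m))).
{ unfold Cpow_pos.
  fold (cexp (Re z * ln (INR m)) (Im z * ln (INR m))).
  fold (cexp (Re z * ln (INR (S m))) (Im z * ln (INR (S m)))).
  rewrite <- cexp_add. unfold ln_step. f_equal; ring. }
unfold Gamma_seq, gauss_ratio. cbn [Cprod_upto]. rewrite E.
change (fact (S m)) with (S m * fact m)%nat.
rewrite mult_INR, RtoC_mult.
field. split; assumption.
Qed.

Lemma succ_mul_ln_step_bound m : (1 <= m)%nat -> Rabs (INR (S m) * ln_step m - 1) <= / INR m.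
Proof.
intros Hm.
assert (HM1 : 1 <= INR m) by (apply (le_INR 1); lia).
destruct (ln_succ_bounds m Hm) as [Ht1 Ht2]. fold (ln_step m) in Ht1, Ht2.
assert (0 < / INR m) by (apply Rinv_0_lt_compat; lra).
rewrite S_INR in *. apply Rabs_le. split.
- apply (Rmult_le_compat_l (INR m + 1)) in Ht1; [|lra].
  rewrite Rinv_r in Ht1 by lra. lra.
- apply (Rmult_le_compat_l (INR m + 1)) in Ht2; [|lra].
  replace ((INR m + 1) * / INR m) with (1 + / INR m) in Ht2 by (field; lra). lra.
Qed.

Lemma cexp_ln_step_bound z m : (1 <= m)%nat -> 2 * Cmod z <= INR m ->
  Cmod (Cminus (Cminus (cexp (Re z * ln_step m) (Im z * ln_step m)) 1) (Cmult z (RtoC (ln_step m))))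
  <= 4 * (Cmod z ^ 2 * (/ INR m) ^ 2).
Proof.
intros Hm HZ.
assert (HM1 : 1 <= INR m) by (apply (le_INR 1); lia).
destruct (ln_succ_bounds m Hm) as [Ht1 Ht2]. fold (ln_step m) in Ht1, Ht2.
assert (Ht0 : 0 < ln_step m).
{ eapply Rlt_le_trans; [|exact Ht1]. apply Rinv_0_lt_compat, lt_0_INR. lia. }
set (t := ln_step m) in *. set (Z := Cmod z) in *.
assert (HZ0 : 0 <= Z) by apply Cmod_ge_0.
assert (HZt : Z * t <= / 2).
{ apply Rle_trans with (Z * / INR m); [apply Rmult_le_compat_l; lra|].
  apply (Rmult_le_reg_l (INR m)); [lra|]. field_simplify; lra. }
assert (HRe := re_le_Cmod z). assert (HIm := Im_le_Cmod z). fold Z in HRe, HIm.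
replace (Cmult z (RtoC t)) with (Re z * t, Im z * t) by (unfold Re, Im; Ceq).
eapply Rle_trans; [apply cexp_sub_linear_bound|].
- rewrite Rabs_mult, (Rabs_pos_eq t) by lra.
  apply Rle_trans with (Z * t); [apply Rmult_le_compat_r|]; lra.
- rewrite Rabs_mult, (Rabs_pos_eq t) by lra.
  apply Rle_trans with (Z * t); [apply Rmult_le_compat_r|]; lra.
- replace ((Re z * t) ^ 2 + (Im z * t) ^ 2) with (Z ^ 2 * t ^ 2) by (unfold Z; rewrite Cmod2_alt; ring).
  apply Rmult_le_compat_l; [lra|]. apply Rmult_le_compat_l; [apply pow2_ge_0|].
  apply pow_incr; lra.
Qed.

Lemma gauss_ratio_sub_1 z m : nonpole z ->
  Cminus (gauss_ratio z m) 1 =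
  Cdiv (Cplus (Cmult (RtoC (INR (S m)))
                     (Cminus (Cminus (cexp (Re z * ln_step m) (Im z * ln_step m)) 1)
                             (Cmult z (RtoC (ln_step m)))))
              (Cmult z (RtoC (INR (S m) * ln_step m - 1))))
       (Cplus z (RtoC (INR (S m)))).
Proof.
intros Hz. unfold gauss_ratio. rewrite RtoC_minus, RtoC_mult. field. apply Hz.
Qed.

Lemma gauss_ratio_bound z m : nonpole z -> (1 <= m)%nat -> 2 * Cmod z <= INR m ->
  Cmod (Cminus (gauss_ratio z m) 1) <= (8 * Cmod z ^ 2 + 2 * Cmod z) * (/ INR m) ^ 2.
Proof.
intros Hz Hm HZ.
assert (HM1 : 1 <= INR m) by (apply (le_INR 1); lia).
assert (HE := cexp_ln_step_bound z m Hm HZ).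
assert (HT := succ_mul_ln_step_bound m Hm). rewrite S_INR in HT.
assert (HD : (INR m + 1) / 2 <= Cmod (Cplus z (RtoC (INR (S m))))).
{ rewrite S_INR. apply Cmod_add_real_lower. lra. }
rewrite gauss_ratio_sub_1 by exact Hz. unfold Cdiv.
rewrite Cmod_mult, Cmod_inv by apply Hz.
set (M := INR m) in *. set (Z := Cmod z) in *.
assert (HZ0 : 0 <= Z) by apply Cmod_ge_0.
eapply Rle_trans.
{ apply Rmult_le_compat.
  - apply Cmod_ge_0.
  - left; apply Rinv_0_lt_compat; lra.
  - eapply Rle_trans; [apply Cmod_triangle|].
    rewrite !Cmod_mult, !Cmod_R, Rabs_pos_eq, S_INR by apply pos_INR. fold M Z.
    apply Rplus_le_compat; apply Rmult_le_compat_l; eassumption || lra.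
  - apply (Rinv_le_contravar ((M + 1) / 2)); [lra|exact HD]. }
replace (((M + 1) * (4 * (Z ^ 2 * (/ M) ^ 2)) + Z * / M) * / ((M + 1) / 2))
  with (8 * Z ^ 2 * (/ M) ^ 2 + 2 * Z * (/ M * / (M + 1))) by (field; lra).
assert (/ M * / (M + 1) <= (/ M) ^ 2).
{ simpl. rewrite Rmult_1_r. apply Rmult_le_compat_l; [apply Rlt_le, Rinv_0_lt_compat; lra|].
  apply Rinv_le_contravar; lra. }
nra.
Qed.

Lemma exists_nat_gt (x : R) : exists N : nat, forall n, (N <= n)%nat -> x < INR n.
Proof.
assert (H := is_lim_seq_INR). apply is_lim_seq_spec in H.
destruct (H x) as [N HN]. exists N. intros n Hn. apply HN. exact Hn.
Qed.

Section ProductConvergence.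
Variables (g q : nat -> C) (M : nat) (K : R).
Hypothesis HM : (1 <= M)%nat.
Hypothesis HK : 0 <= K.
Hypothesis g_succ : forall m, (M <= m)%nat -> g (S m) = Cmult (g m) (q m).
Hypothesis q_near_1 : forall m, (M <= m)%nat -> Cmod (Cminus (q m) 1) <= K * (/ INR m) ^ 2.

(* [tail m] majorizes [sum_(j >= m) K / j^2]. *)
Let tail (m : nat) := 2 * K * / INR m.

Lemma tail_ge0 m : (1 <= m)%nat -> 0 <= tail m.
Proof.
intros Hm. assert (0 < INR m) by (apply lt_0_INR; lia).
unfold tail. apply Rmult_le_pos; [lra|left; apply Rinv_0_lt_compat; lra].
Qed.

Lemma tail_step m : (1 <= m)%nat -> K * (/ INR m) ^ 2 <= tail m - tail (S m).
Proof.
intros Hm. assert (H1 : 1 <= INR m) by (apply (le_INR 1); lia).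
unfold tail. rewrite S_INR.
replace (2 * K * / INR m - 2 * K * / (INR m + 1)) with (K * / INR m * (2 / (INR m + 1)))
  by (field; lra).
replace (K * (/ INR m) ^ 2) with (K * / INR m * / INR m) by (simpl; ring).
apply Rmult_le_compat_l.
- apply Rmult_le_pos; [lra|left; apply Rinv_0_lt_compat; lra].
- apply (Rmult_le_reg_l (INR m * (INR m + 1))); [nra|]. field_simplify; lra.
Qed.

Lemma Cmod_q_le_exp m : (M <= m)%nat -> Cmod (q m) <= exp (tail m - tail (S m)).
Proof.
intros Hm.
replace (q m) with (Cplus (Cminus (q m) 1) 1) by ring.
eapply Rle_trans; [apply Cmod_triangle|]. rewrite Cmod_1.
eapply Rle_trans; [|apply exp_ineq1_le].
assert (H := tail_step m ltac:(lia)). assert (H' := q_near_1 m Hm). lra.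
Qed.

Lemma product_growth m : (M <= m)%nat -> Cmod (g m) <= Cmod (g M) * exp (tail M - tail m).
Proof.
induction m as [|m IH]; intros Hm.
- lia.
- destruct (Nat.eq_dec M (S m)) as [E|E].
  + rewrite E, Rminus_diag, exp_0. lra.
  + assert (Hm' : (M <= m)%nat) by lia.
    rewrite (g_succ m Hm'), Cmod_mult.
    replace (tail M - tail (S m)) with ((tail M - tail m) + (tail m - tail (S m))) by ring.
    rewrite exp_plus, <- Rmult_assoc.
    apply Rmult_le_compat; try apply Cmod_ge_0; auto using Cmod_q_le_exp.
Qed.

Let bound := Cmod (g M) * exp (tail M).

Lemma product_bounded m : (M <= m)%nat -> Cmod (g m) <= bound.
Proof.
intros Hm. eapply Rle_trans; [apply product_growth; exact Hm|].
unfold bound. apply Rmult_le_compat_l; [apply Cmod_ge_0|].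
destruct (tail_ge0 m ltac:(lia)) as [H|H].
- left. apply exp_increasing. lra.
- right. rewrite <- H. f_equal. ring.
Qed.

Lemma product_increment m p : (M <= m)%nat ->
  Cmod (Cminus (g (m + p)) (g m)) <= bound * (tail m - tail (m + p)).
Proof.
intros Hm. induction p as [|p IH].
- rewrite Nat.add_0_r, !Rminus_diag, Rmult_0_r.
  replace (Cminus (g m) (g m)) with (RtoC 0) by ring. rewrite Cmod_0. lra.
- rewrite Nat.add_succ_r.
  assert (Hmp : (M <= m + p)%nat) by lia.
  replace (Cminus (g (S (m + p))) (g m)) with
    (Cplus (Cmult (g (m + p)) (Cminus (q (m + p)) 1)) (Cminus (g (m + p)) (g m)))
    by (rewrite (g_succ _ Hmp); ring).
  eapply Rle_trans; [apply Cmod_triangle|]. rewrite Cmod_mult.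
  assert (H1 : Cmod (g (m + p)) * Cmod (Cminus (q (m + p)) 1) <= bound * (tail (m + p) - tail (S (m + p)))).
  { apply Rmult_le_compat; try apply Cmod_ge_0.
    - apply product_bounded; exact Hmp.
    - eapply Rle_trans; [apply q_near_1; exact Hmp|]. apply tail_step; lia. }
  lra.
Qed.

Lemma product_Cauchy eps : 0 < eps ->
  exists N, forall n m, (N <= n)%nat -> (N <= m)%nat -> Cmod (Cminus (g n) (g m)) < eps.
Proof.
intros Heps.
destruct (exists_nat_gt (2 * bound * 2 * K / eps)) as [N0 HN0].
assert (HB : 0 <= bound) by (apply Rmult_le_pos; [apply Cmod_ge_0|left; apply exp_pos]).
assert (Hle : forall a b, (Nat.max N0 M <= a)%nat -> (a <= b)%nat -> Cmod (Cminus (g b) (g a)) < eps).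
{ intros a b Ha Hab.
  replace b with (a + (b - a))%nat by lia.
  eapply Rle_lt_trans; [apply product_increment; lia|].
  assert (Ha0 : 2 * bound * 2 * K / eps < INR a) by (apply HN0; lia).
  assert (Ha1 : 1 <= INR a) by (apply (le_INR 1); lia).
  assert (H0 := tail_ge0 (a + (b - a)) ltac:(lia)).
  apply Rle_lt_trans with (bound * tail a); [apply Rmult_le_compat_l; lra|].
  unfold tail.
  apply (Rmult_lt_reg_r (INR a)); [lra|].
  replace (bound * (2 * K * / INR a) * INR a) with (bound * 2 * K) by (field; lra).
  apply (Rmult_lt_compat_l eps) in Ha0; [|lra].
  replace (eps * (2 * bound * 2 * K / eps)) with (2 * (bound * 2 * K)) in Ha0 by (field; lra).
  assert (0 <= bound * 2 * K) by (apply Rmult_le_pos; lra).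
  lra. }
exists (Nat.max N0 M). intros n m Hn Hm.
destruct (Nat.le_ge_cases n m) as [H|H].
- rewrite <- Cmod_opp. replace (Copp (Cminus (g n) (g m))) with (Cminus (g m) (g n)) by ring.
  apply Hle; lia.
- apply Hle; lia.
Qed.

Lemma product_converges :
  ex_finite_lim_seq (fun m => Re (g m)) /\ ex_finite_lim_seq (fun m => Im (g m)).
Proof.
split; apply ex_lim_seq_cauchy_corr; intros eps;
  destruct (product_Cauchy eps (cond_pos eps)) as [N HN]; exists N; intros n m Hn Hm;
  eapply Rle_lt_trans; try apply (HN n m Hn Hm).
- apply (re_le_Cmod (Cminus (g n) (g m))).
- apply (Im_le_Cmod (Cminus (g n) (g m))).
Qed.

End ProductConvergence.

Definition is_Clim (u : nat -> C) (l : C) :=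
  is_lim_seq (fun m => Re (u m)) (Re l) /\ is_lim_seq (fun m => Im (u m)) (Im l).

Lemma CGamma_of_is_Clim z l : is_Clim (Gamma_seq z) l -> CGamma z = l.
Proof.
intros [H1 H2]. unfold CGamma.
rewrite (is_lim_seq_unique _ _ H1), (is_lim_seq_unique _ _ H2). simpl.
destruct l; reflexivity.
Qed.

Lemma is_Clim_mult u v a b : is_Clim u a -> is_Clim v b ->
  is_Clim (fun m => Cmult (u m) (v m)) (Cmult a b).
Proof.
intros [Ha1 Ha2] [Hb1 Hb2]. split; simpl.
- apply (is_lim_seq_minus' _ _ _ _ (is_lim_seq_mult' _ _ _ _ Ha1 Hb1) (is_lim_seq_mult' _ _ _ _ Ha2 Hb2)).
- apply (is_lim_seq_plus' _ _ _ _ (is_lim_seq_mult' _ _ _ _ Ha1 Hb2) (is_lim_seq_mult' _ _ _ _ Ha2 Hb1)).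
Qed.

Lemma is_Clim_ext_loc u v l :
  (exists N, forall m, (N <= m)%nat -> u m = v m) -> is_Clim u l -> is_Clim v l.
Proof.
intros [N HN] [H1 H2]. split.
- eapply is_lim_seq_ext_loc; [|exact H1]. exists N. intros m Hm. rewrite HN; auto.
- eapply is_lim_seq_ext_loc; [|exact H2]. exists N. intros m Hm. rewrite HN; auto.
Qed.

Lemma is_lim_seq_scal_inv_INR k : is_lim_seq (fun m => k * / INR m) 0.
Proof.
replace (Finite 0) with (Rbar_mult k (Rbar_inv p_infty)) by (simpl; f_equal; ring).
apply is_lim_seq_scal_l, is_lim_seq_inv; [apply is_lim_seq_INR|discriminate].
Qed.

Lemma is_lim_seq_of_Rabs_bound u l k :
  (exists N, forall m, (N <= m)%nat -> Rabs (u m - l) <= k * / INR m) -> is_lim_seq u l.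
Proof.
intros [N HN].
assert (H0 := is_lim_seq_scal_inv_INR k).
apply is_lim_seq_le_le_loc with (u := fun m => l - k * / INR m) (w := fun m => l + k * / INR m).
- exists N. intros m Hm. apply (proj1 (Rabs_le_between' _ _ _)), HN, Hm.
- replace (Finite l) with (Rbar_minus l 0) by (simpl; f_equal; ring).
  apply is_lim_seq_minus'; [apply is_lim_seq_const|exact H0].
- replace (Finite l) with (Rbar_plus l 0) by (simpl; f_equal; ring).
  apply is_lim_seq_plus'; [apply is_lim_seq_const|exact H0].
Qed.

Lemma is_Clim_of_Cmod_bound u l k :
  (exists N, forall m, (N <= m)%nat -> Cmod (Cminus (u m) l) <= k * / INR m) -> is_Clim u l.
Proof.
intros [N HN]. split; apply is_lim_seq_of_Rabs_bound with k; exists N; intros m Hm;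
  eapply Rle_trans; try apply (HN m Hm).
- apply (re_le_Cmod (Cminus (u m) l)).
- apply (Im_le_Cmod (Cminus (u m) l)).
Qed.

Lemma Gamma_seq_is_Clim z : nonpole z -> is_Clim (Gamma_seq z) (CGamma z).
Proof.
intros Hz.
destruct (exists_nat_gt (2 * Cmod z)) as [N HN].
assert (HK : 0 <= 8 * Cmod z ^ 2 + 2 * Cmod z)
  by (assert (H := Cmod_ge_0 z); assert (H' := pow2_ge_0 (Cmod z)); lra).
destruct (product_converges (Gamma_seq z) (gauss_ratio z) (Nat.max N 1) _ ltac:(lia) HK)
  as [[l1 H1] [l2 H2]].
- intros m Hm. apply Gamma_seq_succ; [exact Hz|lia].
- intros m Hm. apply gauss_ratio_bound; [exact Hz|lia|]. left. apply HN. lia.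
- unfold CGamma, is_Clim.
  rewrite (is_lim_seq_unique _ _ H1), (is_lim_seq_unique _ _ H2). split; assumption.
Qed.

Lemma Cprod_shifts_succ z m :
  Cmult (Cprod_upto m (fun j => Cplus (Cplus z 1) (RtoC (INR j)))) z =
  Cmult (Cprod_upto m (fun j => Cplus z (RtoC (INR j)))) (Cplus z (RtoC (INR (S m)))).
Proof.
induction m; cbn [Cprod_upto].
- Ceq.
- transitivity (Cmult (Cmult (Cprod_upto m (fun j => Cplus (Cplus z 1) (RtoC (INR j)))) z)
                      (Cplus (Cplus z 1) (RtoC (INR (S m))))); [ring|].
  rewrite IHm, (S_INR (S m)), RtoC_plus. ring.
Qed.

Lemma Cpow_pos_succ m z : (1 <= m)%nat ->
  Cpow_pos (INR m) (Cplus z 1) = Cmult (Cpow_pos (INR m) z) (RtoC (INR m)).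
Proof.
intros Hm. assert (H0 : 0 < INR m) by (apply lt_0_INR; lia).
unfold Cpow_pos. fold (cexp (Re z * ln (INR m)) (Im z * ln (INR m))).
replace (Re (Cplus z 1) * ln (INR m)) with (Re z * ln (INR m) + ln (INR m)) by (unfold Re; simpl; ring).
replace (Im (Cplus z 1) * ln (INR m)) with (Im z * ln (INR m) + 0) by (unfold Im; simpl; ring).
fold (cexp (Re z * ln (INR m) + ln (INR m)) (Im z * ln (INR m) + 0)).
rewrite cexp_add. f_equal. unfold cexp. rewrite exp_ln, cos_0, sin_0 by exact H0. Ceq.
Qed.

Lemma Gamma_seq_shift z m : nonpole z -> (1 <= m)%nat ->
  Gamma_seq (Cplus z 1) m =
  Cmult (Gamma_seq z m) (Cdiv (Cmult z (RtoC (INR m))) (Cplus z (RtoC (INR (S m))))).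
Proof.
intros Hz Hm.
assert (HP := Cprod_shifts_neq0 z m Hz).
assert (Hd := Hz (S m)).
assert (H0 : z <> 0) by (intros E; apply (Hz O); rewrite E; Ceq).
assert (HP' : Cprod_upto m (fun j => Cplus (Cplus z 1) (RtoC (INR j))) =
   Cdiv (Cmult (Cprod_upto m (fun j => Cplus z (RtoC (INR j)))) (Cplus z (RtoC (INR (S m))))) z).
{ rewrite <- Cprod_shifts_succ. field. exact H0. }
unfold Gamma_seq. rewrite HP', Cpow_pos_succ by exact Hm.
field. repeat split; assumption.
Qed.

Lemma is_Clim_shift_ratio z :
  is_Clim (fun m => Cdiv (Cmult z (RtoC (INR m))) (Cplus z (RtoC (INR (S m))))) z.
Proof.
apply is_Clim_of_Cmod_bound with (k := 2 * (Cmod z * Cmod (Cplus z 1))).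
destruct (exists_nat_gt (2 * Cmod z)) as [N HN].
exists N. intros m Hm. assert (Hm' := HN m Hm).
assert (HZ := Cmod_ge_0 z). assert (HZ1 := Cmod_ge_0 (Cplus z 1)).
assert (HD : INR (S m) / 2 <= Cmod (Cplus z (RtoC (INR (S m))))).
{ apply Cmod_add_real_lower. rewrite S_INR. lra. }
assert (HS := S_INR m).
assert (Hd : Cplus z (RtoC (INR (S m))) <> 0).
{ intros E. rewrite E, Cmod_0 in HD. lra. }
replace (Cminus (Cdiv (Cmult z (RtoC (INR m))) (Cplus z (RtoC (INR (S m))))) z)
  with (Cdiv (Copp (Cmult z (Cplus z 1))) (Cplus z (RtoC (INR (S m))))).
2: { rewrite S_INR, RtoC_plus in Hd |- *. field. exact Hd. }
unfold Cdiv. rewrite Cmod_mult, Cmod_opp, Cmod_mult, Cmod_inv by exact Hd.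
apply Rle_trans with (Cmod z * Cmod (Cplus z 1) * / (INR m / 2)).
- apply Rmult_le_compat_l; [apply Rmult_le_pos; assumption|].
  apply Rinv_le_contravar; lra.
- right. field. lra.
Qed.

Lemma CGamma_succ z : nonpole z -> CGamma (Cplus z 1) = Cmult z (CGamma z).
Proof.
intros Hz. apply CGamma_of_is_Clim. rewrite Cmult_comm.
eapply is_Clim_ext_loc; [|apply (is_Clim_mult _ _ _ _ (Gamma_seq_is_Clim z Hz) (is_Clim_shift_ratio z))].
exists 1%nat. intros m Hm. symmetry. apply Gamma_seq_shift; assumption.
Qed.

Lemma CGamma_1 : CGamma 1 = 1.
Proof.
apply CGamma_of_is_Clim, is_Clim_of_Cmod_bound with (k := 1). exists 1%nat. intros m Hm.
assert (H0 : 0 < INR m) by (apply lt_0_INR; lia).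
assert (Hf : 0 < INR (fact m)) by (apply lt_0_INR, lt_O_fact).
assert (Hprod : forall j, Cprod_upto j (fun i => Cplus 1 (RtoC (INR i))) = RtoC (INR (fact (S j)))).
{ induction j; cbn [Cprod_upto]; [Ceq|].
  rewrite IHj. change (fact (S (S j))) with (S (S j) * fact (S j))%nat.
  rewrite mult_INR, RtoC_mult, (S_INR (S j)), RtoC_plus. ring. }
unfold Gamma_seq. rewrite Hprod.
replace (Cpow_pos (INR m) 1) with (RtoC (INR m)).
2: { unfold Cpow_pos. simpl. rewrite Rmult_1_l, Rmult_0_l, exp_ln, cos_0, sin_0 by exact H0. Ceq. }
change (fact (S m)) with (S m * fact m)%nat. rewrite mult_INR, S_INR.
replace (Cminus (Cdiv (Cmult (RtoC (INR (fact m))) (RtoC (INR m))) (RtoC ((INR m + 1) * INR (fact m)))) 1)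
  with (RtoC (- / (INR m + 1))).
2: { rewrite <- RtoC_mult, <- RtoC_div, <- RtoC_minus by nra. f_equal. field. lra. }
rewrite Cmod_R, Rabs_Ropp, Rabs_pos_eq by (left; apply Rinv_0_lt_compat; lra).
rewrite Rmult_1_l. apply Rinv_le_contravar; lra.
Qed.

Fixpoint poch (z : C) (k : nat) : C :=
  match k with
  | O => 1
  | S k' => Cmult (poch z k') (Cplus z (RtoC (INR k')))
  end.

Lemma poch_neq0 z k : nonpole z -> poch z k <> 0.
Proof.
intros Hz. induction k; simpl.
- intros E. injection E. lra.
- apply Cmult_neq_0; [exact IHk|apply Hz].
Qed.

Lemma nonpole_add_nat z k : nonpole z -> nonpole (Cplus z (RtoC (INR k))).
Proof.
intros Hz j.
replace (Cplus (Cplus z (RtoC (INR k))) (RtoC (INR j))) with (Cplus z (RtoC (INR (k + j))))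
  by (rewrite plus_INR, RtoC_plus; ring).
apply Hz.
Qed.

Lemma CGamma_add_nat z k : nonpole z -> CGamma (Cplus z (RtoC (INR k))) = Cmult (poch z k) (CGamma z).
Proof.
intros Hz. induction k.
- simpl. replace (Cplus z (RtoC 0)) with z by Ceq. ring.
- replace (Cplus z (RtoC (INR (S k)))) with (Cplus (Cplus z (RtoC (INR k))) 1)
    by (rewrite S_INR, RtoC_plus; ring).
  rewrite CGamma_succ, IHk by (apply nonpole_add_nat; exact Hz).
  simpl. ring.
Qed.

Lemma CGamma_nat j : CGamma (Cplus (RtoC (INR j)) 1) = RtoC (INR (fact j)).
Proof.
assert (H1 : nonpole 1).
{ intros i E. assert (H := pos_INR i). apply (f_equal fst) in E. simpl in E. lra. }
rewrite Cplus_comm, (CGamma_add_nat 1 j H1), CGamma_1, Cmult_1_r.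
induction j; [reflexivity|].
simpl poch. rewrite IHj. change (fact (S j)) with (S j * fact j)%nat.
rewrite mult_INR, S_INR, !RtoC_mult, RtoC_plus. ring.
Qed.

(** * Binomial coefficients through Gamma *)

Lemma Cinv_0 : Cinv 0 = 0.
Proof. unfold Cinv. simpl. Ceq; rewrite !Rmult_0_l, Rplus_0_l; field_simplify; reflexivity. Qed.

Lemma Cinv_mult a b : Cinv (Cmult a b) = Cmult (Cinv a) (Cinv b).
Proof.
destruct (Ceq_dec a 0) as [->|Ha]; [rewrite Cmult_0_l, Cinv_0; ring|].
destruct (Ceq_dec b 0) as [->|Hb]; [rewrite Cmult_0_r, Cinv_0; ring|].
field. split; assumption.
Qed.

Lemma Cinv_inv a : Cinv (Cinv a) = a.
Proof.
destruct (Ceq_dec a 0) as [->|Ha]; [rewrite !Cinv_0; reflexivity|].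
field. exact Ha.
Qed.

(* Unconditional because [Cinv 0 = 0]: we never need to know that [CGamma] has no zeros. *)
Lemma Cinv_Cbinom a b :
  Cinv (Cbinom a b) =
  Cmult (Cinv (CGamma (Cplus a 1))) (Cmult (CGamma (Cplus b 1)) (CGamma (Cplus (Cminus a b) 1))).
Proof. unfold Cbinom, Cdiv. rewrite Cinv_mult, Cinv_inv. reflexivity. Qed.

Lemma Cbinom_nat N K : (K <= N)%nat ->
  Cbinom (RtoC (INR N)) (RtoC (INR K)) = RtoC (INR (binomial.binomial N K)).
Proof.
intros HK. unfold Cbinom.
assert (Hf : forall j, RtoC (INR (fact j)) <> 0).
{ intros j E. apply (f_equal Re) in E. exact (INR_fact_neq_0 j E). }
rewrite <- RtoC_minus, <- minus_INR, !CGamma_nat by exact HK.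
assert (H := BinomialSums.binomial_fact_INR N K HK).
change (ssrnat.subn N K) with (N - K)%nat in H.
rewrite <- H, !RtoC_mult. field. split; apply Hf.
Qed.

Lemma Cbinom_symm a b : Cbinom a (Cminus a b) = Cbinom a b.
Proof.
unfold Cbinom. replace (Cminus a (Cminus a b)) with b by ring.
rewrite (Cmult_comm (CGamma (Cplus b 1))). reflexivity.
Qed.

Lemma nonpole_of_not_neg_int z : ~ is_neg_int z -> z <> 0 -> nonpole z.
Proof.
intros Hn H0 j E. destruct j.
- apply H0. rewrite <- E. Ceq.
- apply Hn. exists j.
  transitivity (Cminus (Cplus z (RtoC (INR (S j)))) (RtoC (INR (S j)))); [ring|].
  rewrite E, RtoC_opp. ring.
Qed.

Lemma nonpole_succ_of_not_neg_int z : ~ is_neg_int z -> nonpole (Cplus z 1).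
Proof.
intros Hn j E. apply Hn. exists j.
transitivity (Cminus (Cplus (Cplus z 1) (RtoC (INR j))) (RtoC (INR (S j)))).
- rewrite S_INR, RtoC_plus. ring.
- rewrite E, RtoC_opp. ring.
Qed.

(* For [x = s + y] this is [B(s + a, y + b) / B(s, y)], with [B] Euler's beta function. *)
Definition beta_ratio (s y x : C) (a b : nat) : C :=
  Cdiv (Cmult (poch s a) (poch y b)) (poch x (a + b)).

Lemma beta_ratio_rec s y x a b : x = Cplus s y -> nonpole x ->
  beta_ratio s y x a (S b) = Cminus (beta_ratio s y x a b) (beta_ratio s y x (S a) b).
Proof.
intros -> Hx. unfold beta_ratio. rewrite Nat.add_succ_r. simpl poch.
replace (Cplus s (RtoC (INR a))) with
  (Cminus (Cplus (Cplus s y) (RtoC (INR (a + b)))) (Cplus y (RtoC (INR b))))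
  by (rewrite plus_INR, RtoC_plus; ring).
field. split; [apply Hx|apply poch_neq0, Hx].
Qed.

Lemma Csum_ext n (f g : nat -> C) :
  (forall k, (k <= n)%nat -> f k = g k) -> Csum_upto n f = Csum_upto n g.
Proof.
induction n; intros H; simpl.
- apply H; lia.
- rewrite IHn by (intros; apply H; lia). rewrite H by lia. reflexivity.
Qed.

Lemma Csum_mult_l n (w : C) (f : nat -> C) :
  Csum_upto n (fun k => Cmult w (f k)) = Cmult w (Csum_upto n f).
Proof. induction n; simpl; [reflexivity|]. rewrite IHn. ring. Qed.

Lemma Csum_real_linear (p : C -> R) (p_add : forall u v, p (Cplus u v) = p u + p v)
  (p_scal : forall (a : R) u, p (Cmult (RtoC a) u) = a * p u) n (c : nat -> R) (f : nat -> C) :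
  p (Csum_upto n (fun k => Cmult (RtoC (c k)) (f k))) = sum_f_R0 (fun k => c k * p (f k)) n.
Proof. induction n; simpl; rewrite ?p_add, ?IHn, p_scal; reflexivity. Qed.

Lemma Csum_binomial_transform (f : nat -> nat -> C)
  (f_rec : forall a b, f a (S b) = Cminus (f a b) (f (S a) b)) n :
  Csum_upto n (fun k => Cmult (RtoC ((-4) ^ k * INR (binomial.binomial (n + k) (2 * k)))) (f k O)) =
  Csum_upto n (fun k => Cmult (RtoC ((-1) ^ (n - k) * INR (binomial.binomial (2 * n + 1) (2 * k + 1))))
                              (f (n - k)%nat k)).
Proof.
apply injective_projections; rewrite !Csum_real_linear by (reflexivity || (intros; simpl; ring)).
- exact (BinomialSums.real_binomial_transform_identity
           (fun a b => fst (f a b)) (fun a b => f_equal fst (f_rec a b)) n).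
- exact (BinomialSums.real_binomial_transform_identity
           (fun a b => snd (f a b)) (fun a b => f_equal snd (f_rec a b)) n).
Qed.

Definition gamma_weight (r s : C) : C :=
  Cmult (Cinv (CGamma (Cplus r 1))) (Cmult (CGamma s) (CGamma (Cplus (Cminus r s) 1))).

Section BinomialTerms.
Variables r s : C.
Hypothesis Hs : nonpole s.
Hypothesis Hx : nonpole (Cplus r 1).
Hypothesis Hy : nonpole (Cplus (Cminus r s) 1).

Lemma Cinv_lower_term k :
  Cinv (Cmult (Cplus (RtoC (INR k)) s) (Cbinom (Cplus (RtoC (INR k)) r) (Cplus (RtoC (INR k)) s))) =
  Cmult (gamma_weight r s) (beta_ratio s (Cplus (Cminus r s) 1) (Cplus r 1) k O).
Proof.
rewrite Cinv_mult, Cinv_Cbinom.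
replace (Cplus (Cplus (RtoC (INR k)) r) 1) with (Cplus (Cplus r 1) (RtoC (INR k))) by ring.
replace (Cplus (Cplus (RtoC (INR k)) s) 1) with (Cplus s (RtoC (INR (S k))))
  by (rewrite S_INR, RtoC_plus; ring).
replace (Cplus (Cminus (Cplus (RtoC (INR k)) r) (Cplus (RtoC (INR k)) s)) 1)
  with (Cplus (Cminus r s) 1) by ring.
rewrite !CGamma_add_nat, Cinv_mult by assumption.
unfold gamma_weight, beta_ratio, Cdiv. rewrite Nat.add_0_r. simpl poch.
set (iG := Cinv (CGamma (Cplus r 1))).
field. split; [apply poch_neq0, Hx|rewrite Cplus_comm; apply Hs].
Qed.

Lemma Cinv_upper_term n k : (k <= n)%nat ->
  Cinv (Cmult (Cplus (RtoC (INR n - INR k)) s)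
              (Cbinom (Cplus (RtoC (INR n)) r) (Cplus (RtoC (INR n - INR k)) s))) =
  Cmult (gamma_weight r s) (beta_ratio s (Cplus (Cminus r s) 1) (Cplus r 1) (n - k) k).
Proof.
intros Hk. rewrite <- minus_INR by exact Hk.
assert (En : INR n = INR (n - k) + INR k) by (rewrite <- plus_INR; f_equal; lia).
rewrite Cinv_mult, Cinv_Cbinom.
replace (Cplus (Cplus (RtoC (INR n)) r) 1) with (Cplus (Cplus r 1) (RtoC (INR n))) by ring.
replace (Cplus (Cplus (RtoC (INR (n - k))) s) 1) with (Cplus s (RtoC (INR (S (n - k)))))
  by (rewrite S_INR, RtoC_plus; ring).
replace (Cplus (Cminus (Cplus (RtoC (INR n)) r) (Cplus (RtoC (INR (n - k))) s)) 1)
  with (Cplus (Cplus (Cminus r s) 1) (RtoC (INR k))) by (rewrite En, RtoC_plus; ring).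
rewrite !CGamma_add_nat, Cinv_mult by assumption.
unfold gamma_weight, beta_ratio, Cdiv. replace (n - k + k)%nat with n by lia. simpl poch.
set (iG := Cinv (CGamma (Cplus r 1))).
field. split; [apply poch_neq0, Hx|rewrite Cplus_comm; apply Hs].
Qed.

End BinomialTerms.

Theorem theorem26 (n : nat) (r s : C)
  (hr : ~ is_neg_int r) (hs : ~ is_neg_int s) (hs0 : s <> RtoC 0) (hrs : ~ is_neg_int (Cminus r s)) :
  Csum_upto n (fun k =>
    Cdiv (Cmult (RtoC ((-1) ^ k * 2 ^ (2 * k)))
                (Cbinom (RtoC (INR (n + k))) (RtoC (INR n - INR k))))
         (Cmult (Cplus (RtoC (INR k)) s)
                (Cbinom (Cplus (RtoC (INR k)) r) (Cplus (RtoC (INR k)) s))))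
  =
  Csum_upto n (fun k =>
    Cdiv (Cmult (RtoC ((-1) ^ (n - k)))
                (Cbinom (RtoC (INR (2 * n + 1))) (RtoC (INR (2 * k + 1)))))
         (Cmult (Cplus (RtoC (INR n - INR k)) s)
                (Cbinom (Cplus (RtoC (INR n)) r) (Cplus (RtoC (INR n - INR k)) s)))).
Proof.
assert (Hs := nonpole_of_not_neg_int s hs hs0).
assert (Hx := nonpole_succ_of_not_neg_int r hr).
assert (Hy := nonpole_succ_of_not_neg_int _ hrs).
transitivity (Cmult (gamma_weight r s) (Csum_upto n (fun k =>
  Cmult (RtoC ((-4) ^ k * INR (binomial.binomial (n + k) (2 * k))))
        (beta_ratio s (Cplus (Cminus r s) 1) (Cplus r 1) k O)))).
- rewrite <- Csum_mult_l. apply Csum_ext. intros k Hk.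
  unfold Cdiv. rewrite Cinv_lower_term by assumption.
  replace (RtoC (INR n - INR k)) with (Cminus (RtoC (INR (n + k))) (RtoC (INR (2 * k))))
    by (rewrite <- RtoC_minus, plus_INR, mult_INR; f_equal; simpl; ring).
  rewrite Cbinom_symm, Cbinom_nat by lia.
  replace ((-1) ^ k * 2 ^ (2 * k)) with ((-4) ^ k)
    by (rewrite pow_mult, <- Rpow_mult_distr; f_equal; ring).
  rewrite RtoC_mult. ring.
- rewrite Csum_binomial_transform by (intros; apply beta_ratio_rec; [ring|exact Hx]).
  rewrite <- Csum_mult_l. apply Csum_ext. intros k Hk.
  unfold Cdiv. rewrite Cinv_upper_term, Cbinom_nat, RtoC_mult by (assumption || lia). ring.
Qed.
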